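(* Let $T : I\to\mathcal{U}$ be a projective presentation, $X$ a type and $\varphi : X \to \mathrm{Prop}$ a predicate. Then \[ \bigcirc_T\Big(\exists_{x:X}\varphi(x)\Big) \;\simeq\; \exists_{A\in T}\ \exists_{x : A \to X}\ \prod_{a:A}\varphi(x(a)), \] where $\exists_{A\in T} Q(A)$ means $\|\sum_{i:I} Q(T(i))\|$.
   Context: Work in homotopy type theory with univalence, universe $\mathcal{U}$. A collection of types is a function $T : I \to \mathcal{U}$; write $X \in T$ for $\exists_{i:I}\, T(i) = X$. A presentation is a collection with $1\in T$ and closed under $\Sigma$ (if $X\in T$ and $B:X\to\mathcal{U}$ with all $B(x)\in T$ then $\sum_{x:X}B(x)\in T$). $\bigcirc_T$ is nullification at the family of propositions $i \mapsto \|T(i)\|$. A type $X$ is projective if for every $B : X \to \mathcal{U}$ with $\prod_{x:X}\|B(x)\|$ we have $\|\prod_{x:X}B(x)\|$. A projective presentation is a presentation all of whose members are projective. *)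

(* HoTT-style notions rendered in Rocq:
   propositional truncation ||A|| := inhabited A (a Prop),
   propositions := Prop, type equality (via univalence) := type equivalence. *)

(* Equivalence of types (quasi-inverse data; logically equivalent to
   being an equivalence). *)
Record Equiv (A B : Type) : Type := {
  eqv_f : A -> B;
  eqv_g : B -> A;
  eqv_fg : forall b, eqv_f (eqv_g b) = b;
  eqv_gf : forall a, eqv_g (eqv_f a) = a
}.

(* X ∈ T  :=  ∃ i, T i = X  (with univalence, T i = X is T i ≃ X). *)
Definition memT {I : Type} (T : I -> Type) (X : Type) : Prop :=
  exists i : I, inhabited (Equiv (T i) X).

Definition presentation {I : Type} (T : I -> Type) : Prop :=
  memT T unit /\
  forall (X : Type) (B : X -> Type),
    memT T X -> (forall x : X, memT T (B x)) -> memT T {x : X & B x}.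

Definition projective (X : Type) : Prop :=
  forall B : X -> Type,
    (forall x : X, inhabited (B x)) -> inhabited (forall x : X, B x).

Definition projective_presentation {I : Type} (T : I -> Type) : Prop :=
  presentation T /\ forall i : I, projective (T i).

(* Nullification ○_T at the family of propositions i ↦ ||T i||, applied to
   a proposition P.  This is the usual inductive construction of
   nullification (point constructor + extension constructor); in Prop the
   path constructors are automatic. *)
Inductive nullT {I : Type} (T : I -> Type) (P : Prop) : Prop :=
  | nullT_ret : P -> nullT T P
  | nullT_ext : forall i : I, (inhabited (T i) -> nullT T P) -> nullT T P.


(* Every point of the nullification is reached from [exists x, phi x] by
   finitely many extension steps.  The right-hand side holds for such a point
   and is stable under extension: given a cover [T j -> X] for each inhabitant
   of a projective [T i], choose one cover per point of [T i] at once and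
   glue them along the presented type [{a : T i & T (j a)}].  Conversely a
   cover [T i -> X] exhibits the statement as an extension of its points. *)

Definition Equiv_refl (A : Type) : Equiv A A :=
  {| eqv_f := fun a => a; eqv_g := fun a => a;
     eqv_fg := fun _ => eq_refl; eqv_gf := fun _ => eq_refl |}.

Lemma memT_index {I : Type} (T : I -> Type) (i : I) : memT T (T i).
Proof. exists i. constructor. exact (Equiv_refl (T i)). Qed.

Definition covered {I : Type} (T : I -> Type) {X : Type} (phi : X -> Prop) : Prop :=
  exists (i : I) (x : T i -> X), forall a : T i, phi (x a).

Section Covers.

Variables (I : Type) (T : I -> Type) (X : Type) (phi : X -> Prop).

Lemma covered_memT (A : Type) (x : A -> X) :
  memT T A -> (forall a : A, phi (x a)) -> covered T phi.
Proof.
  intros [k [E]] Hx. exists k, (fun c => x (eqv_f _ _ E c)).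
  intro c. apply Hx.
Qed.

Lemma covered_of_ex : memT T unit -> (exists x, phi x) -> covered T phi.
Proof.
  intros Hunit [x0 Hx0]. apply (covered_memT unit (fun _ => x0)); auto.
Qed.

Lemma covered_ext (i : I) :
  presentation T -> projective (T i) ->
  (inhabited (T i) -> covered T phi) -> covered T phi.
Proof.
  intros [_ Hsig] Hproj IH.
  pose (Cover (a : T i) := {j : I & {x : T j -> X | forall b, phi (x b)}}).
  assert (HC : forall a, inhabited (Cover a)).
  { intro a. destruct (IH (inhabits a)) as [j [x Hx]].
    constructor. exists j, x. exact Hx. }
  destruct (Hproj Cover HC) as [f].
  apply (covered_memT {a : T i & T (projT1 (f a))}
           (fun c => proj1_sig (projT2 (f (projT1 c))) (projT2 c))).
  - apply Hsig; intros; apply memT_index.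
  - intros [a b]. apply (proj2_sig (projT2 (f a))).
Qed.

Lemma nullT_of_covered : covered T phi -> nullT T (exists x, phi x).
Proof.
  intros [i [x Hx]]. apply (nullT_ext T _ i). intros [a].
  apply nullT_ret. exists (x a). apply Hx.
Qed.

End Covers.

Theorem mainTheorem9 (I : Type) (T : I -> Type)
  (HT : projective_presentation T) (X : Type) (phi : X -> Prop) :
  nullT T (exists x : X, phi x) <->
  (exists (i : I) (x : T i -> X), forall a : T i, phi (x a)).
Proof.
  destruct HT as [Hpres Hproj].
  split.
  - intro H. induction H as [Hex | i _ IH].
    + exact (covered_of_ex I T X phi (proj1 Hpres) Hex).
    + exact (covered_ext I T X phi i Hpres (Hproj i) IH).
  - apply nullT_of_covered.
Qed.
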